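(* Let $T$, $\mathcal{S}=\mathcal{S}_+\cup\mathcal{S}_-$, $\Psi$, $\lambda,\mu$ and the matrices $E,F,G,H$ be as in the context, and let $K:=T_{++}+\Psi T_{-+}$. Let $\mathcal{R}_D$ be the minimal nonnegative solution of $\mathcal{R}^2D_{-1}+\mathcal{R}D_0+D_1=\mathcal{R}$, where $$D_{-1}=\begin{bmatrix}0&0\\0&F\end{bmatrix},\quad D_0=\begin{bmatrix}0&G\\H&0\end{bmatrix},\quad D_1=\begin{bmatrix}E&0\\0&0\end{bmatrix}.$$ Then $$\mathcal{R}_D=\begin{bmatrix}R_1&R_1\Psi\\0&0\end{bmatrix},\qquad\text{where}\quad R_1:=E(I-\Psi H)^{-1}=(I-\mu^{-1}K)^{-1}(I+\lambda^{-1}K).$$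
   Context: $T$ is the generator of a continuous-time Markov chain on a finite set $\mathcal{S}=\mathcal{S}_+\cup\mathcal{S}_-$ (disjoint, both nonempty), partitioned into blocks $T_{++},T_{+-},T_{-+},T_{--}$ according to $\mathcal{S}_\pm$. $\Psi$ is the minimal nonnegative solution of $T_{+-}+\Psi T_{--}+T_{++}\Psi+\Psi T_{-+}\Psi=0$ (the first-return probability matrix of the unit-rate fluid queue with phase generator $T$, rates $+1$ on $\mathcal{S}_+$ and $-1$ on $\mathcal{S}_-$). $\lambda,\mu>0$ satisfy $\lambda,\mu\ge\max_i|T_{ii}|$. The matrices $E$ ($|\mathcal{S}_+|\times|\mathcal{S}_+|$), $G$ ($|\mathcal{S}_+|\times|\mathcal{S}_-|$), $H$ ($|\mathcal{S}_-|\times|\mathcal{S}_+|$), $F$ ($|\mathcal{S}_-|\times|\mathcal{S}_-|$) are defined by $\begin{bmatrix}E&G\\H&F\end{bmatrix}=\begin{bmatrix}I-\mu^{-1}T_{++}&-\lambda^{-1}T_{+-}\\-\mu^{-1}T_{-+}&I-\lambda^{-1}T_{--}\end{bmatrix}^{-1}\begin{bmatrix}I+\lambda^{-1}T_{++}&\mu^{-1}T_{+-}\\\lambda^{-1}T_{-+}&I+\mu^{-1}T_{--}\end{bmatrix}$. $D_{-1},D_0,D_1$ are the transition blocks of a quasi-birth-death process (levels in $\mathbb{Z}+1/2$, phases in $\mathcal{S}$), and $\mathcal{R}_D$ is its $\mathcal{R}$-matrix (expected numbers of visits to the next level up before returning to the starting level). *)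

From HB Require Import structures.
From mathcomp Require Import all_boot all_order all_algebra.
From mathcomp Require Import reals.
Set Implicit Arguments. Unset Strict Implicit. Unset Printing Implicit Defensive.
Import Order.TTheory GRing.Theory Num.Theory.
Local Open Scope ring_scope.

Section Defs.
Variable R : realType.

Definition nonneg_mx m n (A : 'M[R]_(m, n)) : Prop := forall i j, 0 <= A i j.
Definition le_mx m n (A B : 'M[R]_(m, n)) : Prop := forall i j, A i j <= B i j.

Definition min_nonneg_sol m n (P : 'M[R]_(m, n) -> Prop) (X : 'M[R]_(m, n)) : Prop :=
  [/\ nonneg_mx X, P X & forall Y, nonneg_mx Y -> P Y -> le_mx X Y].

Definition generator n (T : 'M[R]_n) : Prop :=
  (forall i j, i != j -> 0 <= T i j) /\ (forall i, \sum_j T i j = 0).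

Variables (p q : nat).
Implicit Types (T : 'M[R]_(p + q)).

(* blocks of T w.r.t. S = S_+ (first p states) u S_- (last q states) *)
Definition Tpp T : 'M[R]_p := ulsubmx T.
Definition Tpm T : 'M[R]_(p, q) := ursubmx T.
Definition Tmp T : 'M[R]_(q, p) := dlsubmx T.
Definition Tmm T : 'M[R]_q := drsubmx T.

Definition psi_eq T (Psi : 'M[R]_(p, q)) : Prop :=
  Tpm T + Psi *m Tmm T + Tpp T *m Psi + Psi *m Tmp T *m Psi = 0.

Definition EGHF T (lam mu : R) : 'M[R]_(p + q) :=
  invmx (block_mx (1%:M - mu^-1 *: Tpp T) (- (lam^-1 *: Tpm T))
                  (- (mu^-1 *: Tmp T)) (1%:M - lam^-1 *: Tmm T))
  *m block_mx (1%:M + lam^-1 *: Tpp T) (mu^-1 *: Tpm T)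
              (lam^-1 *: Tmp T) (1%:M + mu^-1 *: Tmm T).

Definition Emx T lam mu : 'M[R]_p := ulsubmx (EGHF T lam mu).
Definition Gmx T lam mu : 'M[R]_(p, q) := ursubmx (EGHF T lam mu).
Definition Hmx T lam mu : 'M[R]_(q, p) := dlsubmx (EGHF T lam mu).
Definition Fmx T lam mu : 'M[R]_q := drsubmx (EGHF T lam mu).

Definition Dm1 T lam mu : 'M[R]_(p + q) := block_mx 0 0 0 (Fmx T lam mu).
Definition D0 T lam mu : 'M[R]_(p + q) := block_mx 0 (Gmx T lam mu) (Hmx T lam mu) 0.
Definition D1 T lam mu : 'M[R]_(p + q) := block_mx (Emx T lam mu) 0 0 0.

Definition RD_eq T lam mu (X : 'M[R]_(p + q)) : Prop :=
  X *m X *m Dm1 T lam mu + X *m D0 T lam mu + D1 T lam mu = X.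

End Defs.

(* Both minimal solutions are limits of the monotone iterations started at 0.
   The iterates of the QBD equation keep zero bottom rows, so
   R_D = [[A, B], [0, 0]] with A = B H + E and B = A (B F + G).  Put
   Phi := B F + G.  Multiplying [1, A Phi] by the inverse of the matrix that
   defines [E G; H F] shows that Phi solves the Riccati equation and that
   (1/lam + 1/mu) (1 - K(Phi)/mu)^-1 = 1/lam + A/mu.  Hence Psi <= Phi, which
   makes 1 - K(Psi)/mu a nonsingular M-matrix, and R1 := (1 - K/mu)^-1 (1 + K/lam)
   yields the nonnegative solution [[R1, R1 Psi], [0, 0]] of the QBD equation.
   Minimality of R_D gives B <= R1 Psi, so Phi <= Psi; thus Phi = Psi and A = R1.
   Finally 1 - Psi H is invertible because Psi H has no nonzero nonnegative
   subinvariant vector (here Psi 1 <= 1 enters), and E = R1 (1 - Psi H). *)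

From HB Require Import structures.
From mathcomp Require Import all_boot all_order all_algebra.
From mathcomp Require Import reals lra.
From mathcomp Require Import classical_sets boolp topology normedtype sequences.
Import Order.TTheory GRing.Theory Num.Theory.
Import numFieldNormedType.Exports.
Local Open Scope ring_scope.

Set Implicit Arguments. Unset Strict Implicit. Unset Printing Implicit Defensive.

Section MatrixOrder.
Variable R : realType.
Implicit Types m n r : nat.

Lemma le_mx_trans m n (A B C : 'M[R]_(m, n)) : le_mx A B -> le_mx B C -> le_mx A C.
Proof. by move=> hAB hBC i j; exact: le_trans (hAB i j) (hBC i j). Qed.

Lemma le_mx_anti m n (A B : 'M[R]_(m, n)) : le_mx A B -> le_mx B A -> A = B.
Proof. by move=> hAB hBA; apply/matrixP => i j; apply/eqP; rewrite eq_le hAB hBA. Qed.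

Lemma le_mx_subP m n (A B : 'M[R]_(m, n)) : le_mx A B <-> nonneg_mx (B - A).
Proof. by split=> h i j; move: (h i j); rewrite ?mxE subr_ge0. Qed.

Lemma nonneg_le0P m n (A : 'M[R]_(m, n)) : nonneg_mx A <-> le_mx 0 A.
Proof. by split=> h i j; move: (h i j); rewrite mxE. Qed.

Lemma nonneg_le_trans m n (A B : 'M[R]_(m, n)) : nonneg_mx A -> le_mx A B -> nonneg_mx B.
Proof. by move=> hA hAB i j; exact: le_trans (hA i j) (hAB i j). Qed.

Lemma nonneg_mx_anti m n (A : 'M[R]_(m, n)) : nonneg_mx A -> nonneg_mx (- A) -> A = 0.
Proof.
move=> hA hNA; apply/matrixP => i j; have := hA i j; have := hNA i j.
by rewrite !mxE oppr_ge0 => h1 h2; apply/eqP; rewrite eq_le h1 h2.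
Qed.

Lemma nonneg_mx0 m n : nonneg_mx (0 : 'M[R]_(m, n)).
Proof. by move=> i j; rewrite !mxE. Qed.

Lemma nonneg_mx1 n : nonneg_mx (1%:M : 'M[R]_n).
Proof. by move=> i j; rewrite mxE ler0n. Qed.

Lemma nonneg_const_mx m n (x : R) : 0 <= x -> nonneg_mx (const_mx x : 'M[R]_(m, n)).
Proof. by move=> hx i j; rewrite mxE. Qed.

Lemma nonneg_mxD m n (A B : 'M[R]_(m, n)) :
  nonneg_mx A -> nonneg_mx B -> nonneg_mx (A + B).
Proof. by move=> hA hB i j; rewrite mxE addr_ge0. Qed.

Lemma nonneg_mxM m n r (A : 'M[R]_(m, n)) (B : 'M[R]_(n, r)) :
  nonneg_mx A -> nonneg_mx B -> nonneg_mx (A *m B).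
Proof. by move=> hA hB i j; rewrite mxE sumr_ge0 // => k _; rewrite mulr_ge0. Qed.

Lemma nonneg_mxZ m n (x : R) (A : 'M[R]_(m, n)) :
  0 <= x -> nonneg_mx A -> nonneg_mx (x *: A).
Proof. by move=> hx hA i j; rewrite mxE mulr_ge0. Qed.

Lemma le_mxD m n (A A' B B' : 'M[R]_(m, n)) :
  le_mx A A' -> le_mx B B' -> le_mx (A + B) (A' + B').
Proof. by move=> hA hB i j; rewrite !mxE lerD. Qed.

Lemma le_mxZ m n (x : R) (A B : 'M[R]_(m, n)) :
  0 <= x -> le_mx A B -> le_mx (x *: A) (x *: B).
Proof. by move=> hx hAB i j; rewrite !mxE ler_wpM2l. Qed.

Lemma le_mxMl m n r (A : 'M[R]_(m, n)) (B B' : 'M[R]_(n, r)) :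
  nonneg_mx A -> le_mx B B' -> le_mx (A *m B) (A *m B').
Proof. by move=> hA hB i j; rewrite !mxE; apply: ler_sum => k _; rewrite ler_wpM2l. Qed.

Lemma le_mxMr m n r (A A' : 'M[R]_(m, n)) (B : 'M[R]_(n, r)) :
  le_mx A A' -> nonneg_mx B -> le_mx (A *m B) (A' *m B).
Proof. by move=> hA hB i j; rewrite !mxE; apply: ler_sum => k _; rewrite ler_wpM2r. Qed.

Lemma le_mxM m n r (A A' : 'M[R]_(m, n)) (B B' : 'M[R]_(n, r)) :
  nonneg_mx A -> le_mx A A' -> nonneg_mx B -> le_mx B B' -> le_mx (A *m B) (A' *m B').
Proof.
move=> hA hAA' hB hBB'; apply: le_mx_trans (le_mxMl hA hBB') _.
exact: le_mxMr hAA' (nonneg_le_trans hB hBB').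
Qed.

Lemma nonneg_block_mx m1 m2 n1 n2 (A : 'M[R]_(m1, n1)) (B : 'M[R]_(m1, n2))
    (C : 'M[R]_(m2, n1)) (D : 'M[R]_(m2, n2)) :
  nonneg_mx A -> nonneg_mx B -> nonneg_mx C -> nonneg_mx D ->
  nonneg_mx (block_mx A B C D).
Proof.
move=> hA hB hC hD i j.
case: (split_ordP i) => k ->; case: (split_ordP j) => l ->.
- by rewrite block_mxEul.
- by rewrite block_mxEur.
- by rewrite block_mxEdl.
- by rewrite block_mxEdr.
Qed.

Section Submatrices.
Variables m1 m2 n1 n2 : nat.
Variable A : 'M[R]_(m1 + m2, n1 + n2).
Hypothesis A_ge0 : nonneg_mx A.

Lemma nonneg_ulsubmx : nonneg_mx (ulsubmx A). Proof. by move=> i j; rewrite !mxE. Qed.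
Lemma nonneg_ursubmx : nonneg_mx (ursubmx A). Proof. by move=> i j; rewrite !mxE. Qed.
Lemma nonneg_dlsubmx : nonneg_mx (dlsubmx A). Proof. by move=> i j; rewrite !mxE. Qed.
Lemma nonneg_drsubmx : nonneg_mx (drsubmx A). Proof. by move=> i j; rewrite !mxE. Qed.

End Submatrices.
End MatrixOrder.
Arguments nonneg_mx0 {R m n}.
Arguments nonneg_mx1 {R n}.

Section MatrixLimits.
Local Open Scope classical_set_scope.
Variable R : realType.
Implicit Types m n r : nat.

Definition cvgmx m n (u : nat -> 'M[R]_(m, n)) (L : 'M[R]_(m, n)) : Prop :=
  forall i j, (fun k => u k i j) @ \oo --> L i j.

Lemma cvgmx_cst m n (A : 'M[R]_(m, n)) : cvgmx (fun=> A) A.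
Proof. by move=> i j; exact: cvg_cst. Qed.

Lemma cvgmxD m n (u v : nat -> 'M[R]_(m, n)) (A B : 'M[R]_(m, n)) :
  cvgmx u A -> cvgmx v B -> cvgmx (fun k => u k + v k) (A + B).
Proof.
move=> hu hv i j; rewrite mxE; under eq_fun do rewrite mxE.
exact: cvgD (hu i j) (hv i j).
Qed.

Lemma cvgmxZ m n (x : R) (u : nat -> 'M[R]_(m, n)) (A : 'M[R]_(m, n)) :
  cvgmx u A -> cvgmx (fun k => x *: u k) (x *: A).
Proof.
move=> hu i j; rewrite mxE; under eq_fun do rewrite mxE.
exact: cvgMl_tmp (hu i j).
Qed.

Lemma cvgmxM m n r (u : nat -> 'M[R]_(m, n)) (v : nat -> 'M[R]_(n, r)) A B :
  cvgmx u A -> cvgmx v B -> cvgmx (fun k => u k *m v k) (A *m B).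
Proof.
move=> hu hv i j; rewrite mxE; under eq_fun do rewrite mxE.
apply: cvg_big => [|l _]; first exact: add_continuous.
exact: cvgM (hu i l) (hv l j).
Qed.

Lemma le_mx_cvg m n (u v : nat -> 'M[R]_(m, n)) (A B : 'M[R]_(m, n)) :
  cvgmx u A -> cvgmx v B -> (forall k, le_mx (u k) (v k)) -> le_mx A B.
Proof.
move=> hu hv huv i j; apply: ler_cvg_to (hu i j) (hv i j) _.
by apply: nearW => k; exact: huv.
Qed.

End MatrixLimits.
Arguments cvgmx_cst {R m n} A.

Section MinimalFixpoint.
Local Open Scope classical_set_scope.
Variables (R : realType) (m n : nat) (F : 'M[R]_(m, n) -> 'M[R]_(m, n)).
Hypothesis F_homo : forall Y Z, nonneg_mx Y -> le_mx Y Z -> le_mx (F Y) (F Z).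
Hypothesis F0_ge0 : nonneg_mx (F 0).
Hypothesis F_cvg : forall u L, cvgmx u L -> cvgmx (fun k => F (u k)) (F L).

Lemma iter_nonneg_homo (X : 'M[R]_(m, n)) k :
  nonneg_mx X -> F X = X ->
  [/\ nonneg_mx (iter k F 0), le_mx (iter k F 0) (iter k.+1 F 0)
    & le_mx (iter k F 0) X].
Proof.
move=> X_ge0 FX; elim: k => [|k [ge0 homo leX]] /=.
  by split; [exact: nonneg_mx0 | exact/nonneg_le0P | exact/nonneg_le0P].
have ge0' : nonneg_mx (F (iter k F 0)).
  apply: nonneg_le_trans F0_ge0 _; apply: F_homo; [exact: nonneg_mx0 | exact/nonneg_le0P].
split => //; first exact: F_homo ge0 homo.
by rewrite -FX; exact: F_homo ge0 leX.
Qed.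

(* The increasing iterates converge to a fixed point below [X]; minimality of [X]
   forces equality. *)
Lemma cvgmx_iter_min_fixpoint (X : 'M[R]_(m, n)) :
  min_nonneg_sol (fun Y => F Y = Y) X -> cvgmx (fun k => iter k F 0) X.
Proof.
case=> X_ge0 FX X_min; pose u k := iter k F 0.
have u_prop k := iter_nonneg_homo k X_ge0 FX.
pose L := \matrix_(i, j) sup (range (fun k => u k i j)).
have uL : cvgmx u L.
  move=> i j; rewrite mxE; apply: nondecreasing_cvgn.
    by apply/nondecreasing_seqP => k; have [_ h _] := u_prop k; exact: h.
  by exists (X i j) => _ [k _ <-]; have [_ _ h] := u_prop k; exact: h.
have FL : F L = L.
  have FuL : cvgmx (fun k => F (u k)) (F L) := F_cvg uL.
  apply/matrixP => i j; have uSL : (fun k => F (u k) i j) @ \oo --> L i j.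
    by have := uL i j; rewrite -cvg_shiftS.
  exact: (cvg_unique _ (FuL i j) uSL).
have L_ge0 : nonneg_mx L.
  apply/nonneg_le0P; apply: (le_mx_cvg (cvgmx_cst 0) uL) => k.
  by have [/nonneg_le0P] := u_prop k.
have LX : le_mx L X.
  by apply: (le_mx_cvg uL (cvgmx_cst X)) => k; have [] := u_prop k.
by rewrite /u (le_mx_anti (X_min L L_ge0 FL) LX).
Qed.

End MinimalFixpoint.

Section MMatrices.
Variable R : realType.

Definition metzler_mx n (A : 'M[R]_n) : Prop := forall i j, i != j -> 0 <= A i j.

Lemma metzler_mxD n (A B : 'M[R]_n) :
  metzler_mx A -> metzler_mx B -> metzler_mx (A + B).
Proof. by move=> hA hB i j ij; rewrite mxE addr_ge0 ?hA ?hB. Qed.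

Lemma metzler_mxZ n (x : R) (A : 'M[R]_n) :
  0 <= x -> metzler_mx A -> metzler_mx (x *: A).
Proof. by move=> hx hA i j ij; rewrite mxE mulr_ge0 ?hA. Qed.

Lemma nonneg_metzler n (A : 'M[R]_n) : nonneg_mx A -> metzler_mx A.
Proof. by move=> hA i j _. Qed.

Lemma metzler_mul_diag n (A : 'M[R]_n) (v : 'rV[R]_n) :
  metzler_mx A -> (forall j, 0 <= v 0 j) -> metzler_mx (A *m diag_mx v).
Proof. by move=> hA hv i j ij; rewrite mul_mx_diag mxE mulr_ge0 ?hA. Qed.

Lemma nonneg_1D n (A : 'M[R]_n) :
  metzler_mx A -> (forall i, -1 <= A i i) -> nonneg_mx (1%:M + A).
Proof.
move=> hA hdiag i j; rewrite !mxE; have [<-|ij] := eqVneq i j.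
  by rewrite mulr1n addrC -lerBlDr sub0r.
by rewrite add0r hA.
Qed.

Lemma nonneg_1DZ n (x : R) (A Y : 'M[R]_n) :
  0 <= x -> metzler_mx A -> (forall i, -1 <= x * A i i) -> nonneg_mx Y ->
  nonneg_mx (1%:M + x *: (A + Y)).
Proof.
move=> x_ge0 A_metzler A_diag Y_ge0; apply: nonneg_1D => [|i].
  exact/metzler_mxZ/metzler_mxD/nonneg_metzler.
rewrite !mxE mulrDr; apply: le_trans (A_diag i) _.
by rewrite lerDl mulr_ge0 ?Y_ge0.
Qed.

Lemma unitmx_of_ker_nonneg n (A : 'M[R]_n) :
  (forall x : 'cV[R]_n, A *m x = 0 -> nonneg_mx x) -> A \in unitmx.
Proof.
move=> hker; rewrite unitmxE -det_tr unitfE; apply/negP => /det0P [v v_neq0 vA0].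
have Av0 : A *m v^T = 0 by rewrite -[A]trmxK -trmx_mul vA0 trmx0.
have Anv0 : A *m - v^T = 0 by rewrite mulmxN Av0 oppr0.
move/eqP: v_neq0; apply; apply: trmx_inj; rewrite trmx0.
exact: nonneg_mx_anti (hker _ Av0) (hker _ Anv0).
Qed.

Section MMatrix.
Variables (n : nat) (A : 'M[R]_n) (w : 'cV[R]_n).
Hypotheses (A_metzler : metzler_mx A) (w_gt0 : forall i, 0 < w i 0).
Hypothesis Aw_gt0 : forall i, 0 < ((1%:M - A) *m w) i 0.

(* Minimum principle: at a row [i] minimising [X i c / w i], with negative minimum
   [t], the off-diagonal signs give [((1 - A) X) i c <= t ((1 - A) w) i < 0]. *)
Lemma mmatrix_nonneg k (X : 'M[R]_(n, k)) :
  nonneg_mx ((1%:M - A) *m X) -> nonneg_mx X.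
Proof.
move=> hX i0 c; rewrite leNgt; apply/negP => X_lt0.
pose f i := X i c / w i 0.
have [i _ i_min] := @arg_minP _ _ _ i0 xpredT f isT; set t := f i in i_min.
have t_lt0 : t < 0.
  by apply: le_lt_trans (i_min i0 isT) _; rewrite /f pmulr_llt0 ?invr_gt0.
have tw_le j : t * w j 0 <= X j c by rewrite -ler_pdivlMr // i_min.
have Xi : X i c = t * w i 0 by rewrite /t /f divfK // gt_eqF.
have : ((1%:M - A) *m X) i c <= t * ((1%:M - A) *m w) i 0.
  rewrite !mxE mulr_sumr; apply: ler_sum => j _; rewrite mulrCA.
  have [<-|ij] := eqVneq i j; first by rewrite Xi.
  apply: ler_wnM2l (tw_le j); rewrite !mxE (negbTE ij) sub0r oppr_le0; exact: A_metzler.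
by rewrite leNgt (lt_le_trans _ (hX i c)) // pmulr_llt0 // nmulr_rlt0.
Qed.

Lemma mmatrix_unit : (1%:M - A) \in unitmx.
Proof.
by apply: unitmx_of_ker_nonneg => x Ax0; apply: mmatrix_nonneg; rewrite Ax0; exact: nonneg_mx0.
Qed.

Lemma mmatrix_inv_nonneg : nonneg_mx (invmx (1%:M - A)).
Proof. by apply: mmatrix_nonneg; rewrite mulmxV ?mmatrix_unit //; exact: nonneg_mx1. Qed.

End MMatrix.

(* [y := max(-x, 0)] satisfies [y <= P y], so it vanishes. *)
Lemma nonneg_fixpoint n (P : 'M[R]_n) (x : 'cV[R]_n) :
  nonneg_mx P -> (forall y : 'cV[R]_n, nonneg_mx y -> le_mx y (P *m y) -> y = 0) ->
  P *m x = x -> nonneg_mx x.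
Proof.
move=> P_ge0 hsub Px; pose y : 'cV[R]_n := \matrix_(i, j) Num.max (- x i j) 0.
have y_ge0 : nonneg_mx y by move=> i j; rewrite mxE le_max lexx orbT.
have y_sub : le_mx y (P *m y).
  move=> i j; rewrite [y i j]mxE ge_max (nonneg_mxM P_ge0 y_ge0) andbT.
  rewrite -{1}Px !mxE -sumrN; apply: ler_sum => k _.
  by rewrite -mulrN ler_wpM2l // mxE le_max lexx.
move=> i j; have := congr1 (fun M : 'cV[R]_n => M i j) (hsub y y_ge0 y_sub).
by rewrite !mxE => y0; rewrite -oppr_le0 -y0 le_max lexx.
Qed.

Lemma unitmx_1B_nonneg n (P : 'M[R]_n) :
  nonneg_mx P -> (forall y : 'cV[R]_n, nonneg_mx y -> le_mx y (P *m y) -> y = 0) ->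
  (1%:M - P) \in unitmx.
Proof.
move=> P_ge0 hsub; apply: unitmx_of_ker_nonneg => x.
rewrite mulmxBl mul1mx => /eqP; rewrite subr_eq0 eq_sym => /eqP.
exact: nonneg_fixpoint.
Qed.

Section Generator.
Variables (n : nat) (T : 'M[R]_n).
Hypothesis T_gen : generator T.

Lemma generator_metzler : metzler_mx T.
Proof. by case: T_gen. Qed.

Lemma generator_mul1 : T *m const_mx 1 = 0 :> 'cV[R]_n.
Proof.
case: T_gen => _ rows; apply/matrixP => i j; rewrite !mxE -[RHS](rows i).
by apply: eq_bigr => k _; rewrite mxE mulr1.
Qed.

Section Uniformization.
Variable v : 'rV[R]_n.
Hypothesis v_gt0 : forall j, 0 < v 0 j.

Let w : 'cV[R]_n := (map_mx GRing.inv v)^T.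

Lemma generator_diag_fix : (1%:M - T *m diag_mx v) *m w = w.
Proof.
have vw : diag_mx v *m w = const_mx 1.
  by apply/matrixP => i j; rewrite mul_diag_mx !mxE (ord1 j) mulfV ?gt_eqF.
by rewrite mulmxBl mul1mx -mulmxA vw generator_mul1 subr0.
Qed.

Let Tv_metzler : metzler_mx (T *m diag_mx v).
Proof. by apply: metzler_mul_diag generator_metzler _ => j; exact: ltW. Qed.

Let w_gt0 i : 0 < w i 0.
Proof. by rewrite !mxE invr_gt0. Qed.

Let Tvw_gt0 i : 0 < ((1%:M - T *m diag_mx v) *m w) i 0.
Proof. by rewrite generator_diag_fix. Qed.

Lemma generator_diag_unit : (1%:M - T *m diag_mx v) \in unitmx.
Proof. exact: mmatrix_unit Tv_metzler w_gt0 Tvw_gt0. Qed.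

Lemma generator_diag_inv_nonneg : nonneg_mx (invmx (1%:M - T *m diag_mx v)).
Proof. exact: mmatrix_inv_nonneg Tv_metzler w_gt0 Tvw_gt0. Qed.

Lemma generator_diag_1D_nonneg :
  (forall i, -1 <= T i i * v 0 i) -> nonneg_mx (1%:M + T *m diag_mx v).
Proof. by move=> hdiag; apply: nonneg_1D Tv_metzler _ => i; rewrite mul_mx_diag mxE. Qed.

End Uniformization.
End Generator.
End MMatrices.

Section FluidQueue.
Variables (R : realType) (p q : nat) (T : 'M[R]_(p + q)) (lam mu : R).
Hypotheses (T_gen : generator T) (lam_gt0 : 0 < lam) (mu_gt0 : 0 < mu).
Hypotheses (T_lam : forall i, `|T i i| <= lam) (T_mu : forall i, `|T i i| <= mu).

Local Notation a := (Tpp T).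
Local Notation b := (Tpm T).
Local Notation c := (Tmp T).
Local Notation d := (Tmm T).
Local Notation E := (Emx T lam mu).
Local Notation G := (Gmx T lam mu).
Local Notation H := (Hmx T lam mu).
Local Notation F := (Fmx T lam mu).
Local Notation "''1_' k" := (const_mx 1 : 'cV[R]_k) (at level 8, k at level 2).

Lemma T_block : T = block_mx a b c d.
Proof. by rewrite submxK. Qed.

Lemma Tpm_nonneg : nonneg_mx b.
Proof. by move=> i j; rewrite !mxE generator_metzler // eq_lrshift. Qed.

Lemma Tmp_nonneg : nonneg_mx c.
Proof. by move=> i j; rewrite !mxE generator_metzler // eq_rlshift. Qed.

Lemma Tpp_metzler : metzler_mx a.
Proof. by move=> i j ij; rewrite !mxE generator_metzler // (inj_eq (@lshift_inj _ _)). Qed.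

Lemma Tmm_metzler : metzler_mx d.
Proof. by move=> i j ij; rewrite !mxE generator_metzler // (inj_eq (@rshift_inj _ _)). Qed.

Lemma T_mul1_blocks : a *m '1_p + b *m '1_q = 0 /\ c *m '1_p + d *m '1_q = 0.
Proof.
have := generator_mul1 T_gen; rewrite {1}T_block -col_mx_const mul_block_col.
by rewrite -[0]vsubmxK => /eq_col_mx [-> ->]; rewrite !linear0.
Qed.

Lemma Tpp_mul1 : a *m '1_p = - (b *m '1_q).
Proof. by apply/eqP; rewrite -addr_eq0; have [/eqP] := T_mul1_blocks. Qed.

Lemma Tmm_mul1 : d *m '1_q = - (c *m '1_p).
Proof. by apply/eqP; rewrite -addr_eq0 addrC; have [_ /eqP] := T_mul1_blocks. Qed.

Lemma T_diag_div_ge (x : R) i : 0 < x -> (forall i, `|T i i| <= x) ->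
  -1 <= T i i * x^-1.
Proof.
move=> x_gt0 Tx; have /andP [Tii_ge _] : - x <= T i i <= x by rewrite -ler_norml.
by rewrite -(mulfV (lt0r_neq0 x_gt0)) -mulNr ler_pM2r ?invr_gt0.
Qed.

Definition cayley_den : 'M[R]_(p + q) :=
  block_mx (1%:M - mu^-1 *: a) (- (lam^-1 *: b)) (- (mu^-1 *: c)) (1%:M - lam^-1 *: d).
Definition cayley_num : 'M[R]_(p + q) :=
  block_mx (1%:M + lam^-1 *: a) (mu^-1 *: b) (lam^-1 *: c) (1%:M + mu^-1 *: d).

Lemma EGHFE : EGHF T lam mu = invmx cayley_den *m cayley_num.
Proof. by []. Qed.

Let rates (x y : R) : 'rV[R]_(p + q) := row_mx (const_mx x) (const_mx y).

Let rates_gt0 (x y : R) : 0 < x -> 0 < y -> forall j, 0 < rates x y 0 j.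
Proof.
by move=> x_gt0 y_gt0 j; case: (split_ordP j) => k ->; rewrite ?row_mxEl ?row_mxEr mxE.
Qed.

Let mul_rates (x y : R) :
  T *m diag_mx (rates x y) = block_mx (x *: a) (y *: b) (x *: c) (y *: d).
Proof.
rewrite {1}T_block diag_mx_row !diag_const_mx mulmx_block.
by rewrite !mulmx0 !addr0 !add0r !mul_mx_scalar.
Qed.

(* [EGHF] is the Cayley-type transform [(1 - T D)^-1 (1 + T D')] of [T] with the
   diagonal rate matrices [D = diag(1/mu, 1/lam)] and [D' = diag(1/lam, 1/mu)];
   this is where its nonnegativity comes from. *)
Lemma cayley_denE : cayley_den = 1%:M - T *m diag_mx (rates mu^-1 lam^-1).
Proof.
by rewrite mul_rates (scalar_mx_block p q) opp_block_mx add_block_mx !sub0r.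
Qed.

Lemma cayley_numE : cayley_num = 1%:M + T *m diag_mx (rates lam^-1 mu^-1).
Proof. by rewrite mul_rates (scalar_mx_block p q) add_block_mx !add0r. Qed.

Lemma cayley_den_unit : cayley_den \in unitmx.
Proof.
by rewrite cayley_denE; apply: generator_diag_unit => //; apply: rates_gt0; rewrite invr_gt0.
Qed.

Lemma EGHF_nonneg : nonneg_mx (EGHF T lam mu).
Proof.
rewrite EGHFE cayley_denE cayley_numE; apply: nonneg_mxM.
  by apply: generator_diag_inv_nonneg => //; apply: rates_gt0; rewrite invr_gt0.
have rates_lm_gt0 : forall j, 0 < rates lam^-1 mu^-1 0 j.
  by apply: rates_gt0; rewrite invr_gt0.
apply: (generator_diag_1D_nonneg T_gen rates_lm_gt0) => i.
case: (split_ordP i) => k ->; rewrite ?row_mxEl ?row_mxEr mxE.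
  exact: T_diag_div_ge lam_gt0 T_lam.
exact: T_diag_div_ge mu_gt0 T_mu.
Qed.

Lemma cayley_den_EGHF : cayley_den *m EGHF T lam mu = cayley_num.
Proof. by rewrite EGHFE mulKVmx // cayley_den_unit. Qed.

Lemma EGHF_block : EGHF T lam mu = block_mx E G H F.
Proof. by rewrite submxK. Qed.

Lemma E_nonneg : nonneg_mx E. Proof. exact: nonneg_ulsubmx EGHF_nonneg. Qed.
Lemma G_nonneg : nonneg_mx G. Proof. exact: nonneg_ursubmx EGHF_nonneg. Qed.
Lemma H_nonneg : nonneg_mx H. Proof. exact: nonneg_dlsubmx EGHF_nonneg. Qed.
Lemma F_nonneg : nonneg_mx F. Proof. exact: nonneg_drsubmx EGHF_nonneg. Qed.

Definition Kmx (X : 'M[R]_(p, q)) : 'M[R]_p := a + X *m c.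

Lemma psi_eqE X : psi_eq T X <-> b + X *m d = - (Kmx X *m X).
Proof.
rewrite /psi_eq /Kmx mulmxDl -addrA.
by split => [/eqP|->]; [rewrite addr_eq0 => /eqP | rewrite addNr].
Qed.

Lemma row_cayley_den X : psi_eq T X ->
  row_mx 1%:M X *m cayley_den =
  row_mx (1%:M - mu^-1 *: Kmx X) ((1%:M + lam^-1 *: Kmx X) *m X).
Proof.
move=> /psi_eqE XE; rewrite mul_row_block !mul1mx; congr row_mx.
  by rewrite mulmxN -scalemxAr -addrA -opprD -scalerDr.
rewrite mulmxBr mulmx1 -scalemxAr addrCA -opprD -scalerDr XE.
by rewrite mulmxDl mul1mx -scalemxAl scalerN opprK addrC.
Qed.

Lemma row_cayley_num X : psi_eq T X ->
  row_mx 1%:M X *m cayley_num =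
  row_mx (1%:M + lam^-1 *: Kmx X) ((1%:M - mu^-1 *: Kmx X) *m X).
Proof.
move=> /psi_eqE XE; rewrite mul_row_block !mul1mx; congr row_mx.
  by rewrite -scalemxAr -addrA -scalerDr.
rewrite mulmxDr mulmx1 -scalemxAr addrCA -scalerDr XE.
by rewrite mulmxBl mul1mx -scalemxAl scalerN addrC.
Qed.

Lemma riccati_EGHF X : psi_eq T X ->
  (1%:M - mu^-1 *: Kmx X) *m E + (1%:M + lam^-1 *: Kmx X) *m X *m H
    = 1%:M + lam^-1 *: Kmx X /\
  (1%:M - mu^-1 *: Kmx X) *m G + (1%:M + lam^-1 *: Kmx X) *m X *m F
    = (1%:M - mu^-1 *: Kmx X) *m X.
Proof.
move=> XE; have := congr1 (mulmx (row_mx 1%:M X)) cayley_den_EGHF.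
by rewrite mulmxA row_cayley_den // row_cayley_num // EGHF_block mul_row_block => /eq_row_mx.
Qed.

Lemma Tpp_diag_ge (x : R) : 0 < x -> (forall i, `|T i i| <= x) ->
  forall i, -1 <= x^-1 * a i i.
Proof. by move=> x_gt0 Tx i; rewrite !mxE mulrC; exact: T_diag_div_ge. Qed.

Lemma Tmm_diag_ge (x : R) : 0 < x -> (forall i, `|T i i| <= x) ->
  forall i, -1 <= x^-1 * d i i.
Proof. by move=> x_gt0 Tx i; rewrite !mxE mulrC; exact: T_diag_div_ge. Qed.

Let half_ge0 : 0 <= 2%:R^-1 :> R. Proof. by rewrite invr_ge0 ler0n. Qed.
Let mu_inv_ge0 : 0 <= mu^-1. Proof. by rewrite invr_ge0 ltW. Qed.
Let lam_inv_gt0 : 0 < lam^-1. Proof. by rewrite invr_gt0. Qed.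

(* [X + (Riccati residual of X) / (2 mu)], written with nonnegative coefficients
   so that it is monotone; its fixed points are the solutions of [psi_eq]. *)
Definition riccati_step (X : 'M[R]_(p, q)) : 'M[R]_(p, q) :=
  2%:R^-1 *: (mu^-1 *: b + X *m (1%:M + mu^-1 *: d) + (1%:M + mu^-1 *: a) *m X
           + mu^-1 *: (X *m c *m X)).

Lemma riccati_stepE X :
  riccati_step X = X + (2%:R^-1 * mu^-1) *: (b + X *m d + a *m X + X *m c *m X).
Proof.
have regroup (V : zmodType) (Y u1 u2 u3 u4 : V) :
    u1 + (Y + u2) + (Y + u3) + u4 = (Y + Y) + (u1 + u2 + u3 + u4).
  by rewrite [u1 + (Y + u2)]addrCA [Y + _ + (Y + u3)]addrACA [RHS]addrA.
rewrite /riccati_step mulmxDr mulmx1 mulmxDl mul1mx -!scalemxAr -!scalemxAl.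
rewrite regroup -!scalerDr -[X + X]mulr2n -[X *+ 2]scaler_nat [2%:R^-1 *: _]scalerDr.
by rewrite !scalerA mulVf ?pnatr_eq0 // scale1r.
Qed.

Lemma riccati_step_fix X : riccati_step X = X <-> psi_eq T X.
Proof.
have hm_neq0 : 2%:R^-1 * mu^-1 != 0 :> R by rewrite mulf_neq0 ?invr_eq0 ?pnatr_eq0 ?gt_eqF.
rewrite riccati_stepE /psi_eq; split => [|->]; last by rewrite scaler0 addr0.
by move/(canRL (addKr X)); rewrite addNr => /eqP; rewrite scaler_eq0 (negbTE hm_neq0) => /eqP.
Qed.

Let one_a_ge0 : nonneg_mx (1%:M + mu^-1 *: a).
Proof.
have := nonneg_1DZ mu_inv_ge0 Tpp_metzler (Tpp_diag_ge mu_gt0 T_mu) nonneg_mx0.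
by rewrite addr0.
Qed.

Let one_d_ge0 : nonneg_mx (1%:M + mu^-1 *: d).
Proof.
have := nonneg_1DZ mu_inv_ge0 Tmm_metzler (Tmm_diag_ge mu_gt0 T_mu) nonneg_mx0.
by rewrite addr0.
Qed.

Lemma riccati_step_homo Y Z :
  nonneg_mx Y -> le_mx Y Z -> le_mx (riccati_step Y) (riccati_step Z).
Proof.
move=> Y_ge0 YZ.
apply: le_mxZ half_ge0 _; apply: le_mxD; last first.
  apply: le_mxZ mu_inv_ge0 _.
  exact: le_mxM (nonneg_mxM Y_ge0 Tmp_nonneg) (le_mxMr YZ Tmp_nonneg) Y_ge0 YZ.
apply: le_mxD (le_mxMl one_a_ge0 YZ).
exact: le_mxD (fun i j => lexx _) (le_mxMr YZ one_d_ge0).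
Qed.

Lemma riccati_step0_nonneg : nonneg_mx (riccati_step 0).
Proof.
rewrite /riccati_step !mul0mx mulmx0 !scaler0 !addr0.
by apply: nonneg_mxZ half_ge0 _; exact: nonneg_mxZ mu_inv_ge0 Tpm_nonneg.
Qed.

Lemma riccati_step_cvg u L :
  cvgmx u L -> cvgmx (fun k => riccati_step (u k)) (riccati_step L).
Proof.
move=> uL; apply: cvgmxZ; apply: cvgmxD; last exact/cvgmxZ/cvgmxM/uL/cvgmxM/cvgmx_cst.
apply: cvgmxD; last exact: cvgmxM (cvgmx_cst _) uL.
by apply: cvgmxD (cvgmx_cst _) _; exact: cvgmxM uL (cvgmx_cst _).
Qed.

(* Row sums: the step maps [X 1 <= 1] to [(1 + X 1) / 2 <= 1]. *)
Lemma riccati_step_mul1 X : nonneg_mx X -> le_mx (X *m '1_q) '1_p ->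
  le_mx (riccati_step X *m '1_q) '1_p.
Proof.
move=> X_ge0 X1.
have sum1 : mu^-1 *: (b *m '1_q) + X *m ((1%:M + mu^-1 *: d) *m '1_q)
    + (1%:M + mu^-1 *: a) *m '1_p + mu^-1 *: (X *m (c *m '1_p)) = '1_p + X *m '1_q.
  have shuffle (V : zmodType) (u x v o : V) : u + (x - v) + (o - u) + v = o + x.
    by rewrite (addrAC u) [u + (o - u)]addrC subrK -addrA subrK.
  rewrite !mulmxDl !mul1mx -!scalemxAl Tmm_mul1 Tpp_mul1 mulmxDr -!scalemxAr mulmxN.
  by rewrite !scalerN shuffle.
have stepE : riccati_step X *m '1_q = 2%:R^-1 *: (mu^-1 *: (b *m '1_q)
    + X *m ((1%:M + mu^-1 *: d) *m '1_q) + (1%:M + mu^-1 *: a) *m (X *m '1_q)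
    + mu^-1 *: (X *m (c *m (X *m '1_q)))).
  rewrite /riccati_step -scalemxAl; congr (_ *: _).
  rewrite !(mulmxDl, mulmxDr, mul1mx, mulmx1, mulmxA).
  by rewrite -?scalemxAl ?scalemxAr -?scalemxAl ?scalemxAr ?mulmxA.
apply: (@le_mx_trans _ _ _ _ (2%:R^-1 *: ('1_p + X *m '1_q))).
  rewrite stepE -sum1; apply: le_mxZ half_ge0 _.
  apply: le_mxD (le_mxZ mu_inv_ge0 (le_mxMl X_ge0 (le_mxMl Tmp_nonneg X1))).
  exact: le_mxD (fun i j => lexx _) (le_mxMl one_a_ge0 X1).
by move=> i j; have := X1 i j; rewrite !mxE; lra.
Qed.

Lemma psi_mul1_le1 Psi : min_nonneg_sol (psi_eq T) Psi -> le_mx (Psi *m '1_q) '1_p.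
Proof.
move=> Psi_min; have Psi_fix : min_nonneg_sol (fun Y => riccati_step Y = Y) Psi.
  case: Psi_min => Psi_ge0 /riccati_step_fix Psi_eq Psi_le.
  by split=> // Y Y_ge0 /riccati_step_fix; exact: Psi_le.
have iter_le k : nonneg_mx (iter k riccati_step 0) /\
    le_mx (iter k riccati_step 0 *m '1_q) '1_p.
  elim: k => [|k [ge0 le1]] /=.
    by split; [exact: nonneg_mx0 | move=> i j; rewrite mul0mx !mxE].
  split; last exact: riccati_step_mul1.
  apply: nonneg_le_trans riccati_step0_nonneg _; apply: riccati_step_homo.
    exact: nonneg_mx0.
  exact/nonneg_le0P.
have := cvgmx_iter_min_fixpoint riccati_step_homo riccati_step0_nonneg riccati_step_cvg Psi_fix.
move=> /cvgmxM /(_ (cvgmx_cst '1_q)) iter_cvg.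
by apply: (le_mx_cvg iter_cvg (cvgmx_cst _)) => k; case: (iter_le k).
Qed.

Definition qbd_step (X : 'M[R]_(p + q)) : 'M[R]_(p + q) :=
  X *m X *m Dm1 T lam mu + X *m D0 T lam mu + D1 T lam mu.

Lemma qbd_step_block (A : 'M[R]_p) (B : 'M[R]_(p, q)) :
  qbd_step (block_mx A B 0 0) = block_mx (B *m H + E) (A *m B *m F + A *m G) 0 0.
Proof.
rewrite /qbd_step /Dm1 /D0 /D1 !mulmx_block !(mulmx0, mul0mx, addr0, add0r).
by rewrite !add_block_mx !(addr0, add0r).
Qed.

Lemma qbd_blocks_nonneg :
  [/\ nonneg_mx (Dm1 T lam mu), nonneg_mx (D0 T lam mu) & nonneg_mx (D1 T lam mu)].
Proof.
split; apply: nonneg_block_mx;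
  by [exact: nonneg_mx0 | exact: F_nonneg | exact: G_nonneg | exact: H_nonneg | exact: E_nonneg].
Qed.

Lemma qbd_step_homo Y Z : nonneg_mx Y -> le_mx Y Z -> le_mx (qbd_step Y) (qbd_step Z).
Proof.
move=> Y_ge0 YZ; have [Dm1_ge0 D0_ge0 _] := qbd_blocks_nonneg.
apply: le_mxD (fun i j => lexx _); apply: le_mxD (le_mxMr YZ D0_ge0).
exact: le_mxMr (le_mxM Y_ge0 YZ Y_ge0 YZ) Dm1_ge0.
Qed.

Lemma qbd_step0_nonneg : nonneg_mx (qbd_step 0).
Proof. by rewrite /qbd_step !mul0mx !add0r; have [] := qbd_blocks_nonneg. Qed.

Lemma qbd_step_cvg u L : cvgmx u L -> cvgmx (fun k => qbd_step (u k)) (qbd_step L).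
Proof.
move=> uL; apply: cvgmxD (cvgmx_cst _); apply: cvgmxD (cvgmxM uL (cvgmx_cst _)).
exact: cvgmxM (cvgmxM uL uL) (cvgmx_cst _).
Qed.

(* The iterates from [0] never leave the block form [[A, B], [0, 0]]. *)
Lemma qbd_min_sol_dsubmx RD : min_nonneg_sol (RD_eq T lam mu) RD -> dsubmx RD = 0.
Proof.
move=> RD_min; have [RD_ge0 _ _] := RD_min.
have iter_d k : dsubmx (iter k qbd_step 0) = 0.
  suff [A [B ->]] : exists A B, iter k qbd_step 0 = block_mx A B 0 0.
    by rewrite /block_mx col_mxKd row_mx0.
  elim: k => [|k [A [B /= ->]]]; first by exists 0, 0; rewrite block_mx0.
  by rewrite qbd_step_block; eexists; eexists.
have iter_cvg := cvgmx_iter_min_fixpoint qbd_step_homo qbd_step0_nonneg qbd_step_cvg RD_min.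
have d_cvg : cvgmx (fun k => dsubmx (iter k qbd_step 0)) (dsubmx RD).
  by move=> i j; rewrite mxE; under eq_fun do rewrite mxE; exact: iter_cvg.
apply: le_mx_anti; last by move=> i j; rewrite !mxE.
by apply: (le_mx_cvg d_cvg (cvgmx_cst 0)) => k; rewrite iter_d => i j.
Qed.

Lemma qbd_min_sol_block RD : min_nonneg_sol (RD_eq T lam mu) RD ->
  [/\ RD = block_mx (ulsubmx RD) (ursubmx RD) 0 0,
      ulsubmx RD = ursubmx RD *m H + E
    & ursubmx RD = ulsubmx RD *m ursubmx RD *m F + ulsubmx RD *m G].
Proof.
move=> RD_min; have RDE : RD = block_mx (ulsubmx RD) (ursubmx RD) 0 0.
  by rewrite -{1}[RD]submxK /dlsubmx /drsubmx qbd_min_sol_dsubmx // !linear0.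
have [_ RD_fix _] := RD_min; move: RD_fix; rewrite /RD_eq.
rewrite -/(qbd_step RD) {1 2}RDE qbd_step_block => /eq_block_mx [eA eB _ _].
by split=> //; apply/esym.
Qed.

(* [Y := [1, A Phi] / cayley_den] satisfies [Y cayley_num = [A, Phi]]; comparing
   blocks shows [Y = [Y1, Y1 Phi]] with [Y1] inverting [1 - K(Phi)/mu]. *)
Lemma qbd_riccati (A : 'M[R]_p) (Phi : 'M[R]_(p, q)) :
  A = A *m Phi *m H + E -> Phi = A *m Phi *m F + G ->
  [/\ psi_eq T Phi, (1%:M - mu^-1 *: Kmx Phi) \in unitmx
    & (lam^-1 + mu^-1) *: invmx (1%:M - mu^-1 *: Kmx Phi) = lam^-1 *: 1%:M + mu^-1 *: A].
Proof.
move=> AE PhiE; pose Y := row_mx 1%:M (A *m Phi) *m invmx cayley_den.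
have Y_den : Y *m cayley_den = row_mx 1%:M (A *m Phi) by rewrite mulmxKV ?cayley_den_unit.
have Y_num : Y *m cayley_num = row_mx A Phi.
  rewrite -cayley_den_EGHF mulmxA Y_den EGHF_block mul_row_block !mul1mx.
  by rewrite addrC -AE addrC -PhiE.
move: Y_den Y_num; rewrite -(hsubmxK Y) !mul_row_block.
set Y1 := lsubmx Y; set Y2 := rsubmx Y.
case/eq_row_mx => Y_den1 Y_den2; case/eq_row_mx => Y_num1 Y_num2.
pose P := Y1 *m a + Y2 *m c; pose S := Y1 *m b + Y2 *m d.
have lm_neq0 : lam^-1 + mu^-1 != 0 by rewrite gt_eqF // addr_gt0 ?invr_gt0.
have Y1E : Y1 = 1%:M + mu^-1 *: P.
  by rewrite -Y_den1 mulmxBr mulmx1 mulmxN -!scalemxAr scalerDr -[Y1 - _ - _]addrA -opprD subrK.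
have AE' : A = 1%:M + (lam^-1 + mu^-1) *: P.
  rewrite -Y_num1 mulmxDr mulmx1 -!scalemxAr -addrA -scalerDr -/P {1}Y1E scalerDl.
  by rewrite -addrA [mu^-1 *: P + _]addrC.
have Y2E : Y2 = Phi - mu^-1 *: S.
  by rewrite -Y_num2 mulmxDr mulmx1 -!scalemxAr addrCA -scalerDr -/S addrK.
have APhiE : A *m Phi = Phi - (lam^-1 + mu^-1) *: S.
  rewrite -Y_den2 mulmxN mulmxBr mulmx1 -!scalemxAr addrCA -opprD -scalerDr -/S Y2E.
  by rewrite scalerDl opprD addrA addrAC.
have PPhiE : P *m Phi = - S.
  apply: (scalerI lm_neq0); move: APhiE; rewrite AE' mulmxDl mul1mx -scalemxAl.
  by move/addrI ->; rewrite scalerN.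
have Y2Y1 : Y2 = Y1 *m Phi by rewrite Y2E {1}Y1E mulmxDl mul1mx -scalemxAl PPhiE scalerN.
have Y1_inv : Y1 *m (1%:M - mu^-1 *: Kmx Phi) = 1%:M.
  rewrite mulmxBr mulmx1 -scalemxAr mulmxDr [Y1 *m (Phi *m c)]mulmxA -Y2Y1 -/P.
  by rewrite {1}Y1E addrK.
have Y1_unit := (mulmx1_unit Y1_inv).1; have Z_unit := (mulmx1_unit Y1_inv).2.
have invE : invmx (1%:M - mu^-1 *: Kmx Phi) = Y1.
  by rewrite -[Y1](mulKmx Z_unit) (mulmx1C Y1_inv) mulmx1.
split=> //; last by rewrite invE Y1E AE' !scalerDr !scalerA scalerDl mulrC !addrA.
rewrite /psi_eq; set psi := (X in X = 0).
suff Y1psi : Y1 *m psi = 0 by rewrite -(mulKmx Y1_unit psi) Y1psi mulmx0.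
by rewrite /psi !mulmxDr !mulmxA -Y2Y1 -/S -addrA -mulmxDl -/P PPhiE subrr.
Qed.

Local Notation denK X := (1%:M - mu^-1 *: Kmx X).
Local Notation numK X := (1%:M + lam^-1 *: Kmx X).

Let lm_gt0 : 0 < lam^-1 + mu^-1. Proof. by rewrite addr_gt0 ?invr_gt0. Qed.

Lemma numK_nonneg X : nonneg_mx X -> nonneg_mx (numK X).
Proof.
move=> X_ge0; apply: nonneg_1DZ (ltW lam_inv_gt0) Tpp_metzler _ (nonneg_mxM X_ge0 Tmp_nonneg).
exact: Tpp_diag_ge lam_gt0 T_lam.
Qed.

Lemma Kmx_metzler X : nonneg_mx X -> metzler_mx (Kmx X).
Proof.
by move=> X_ge0; apply: metzler_mxD Tpp_metzler (nonneg_metzler (nonneg_mxM X_ge0 Tmp_nonneg)).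
Qed.

(* The column [w := (1 - K(Phi)/mu)^-1 1] is positive, and
   [(1 - K(Psi)/mu) w = 1 + (Phi - Psi) c w / mu >= 1]. *)
Lemma denK_mmatrix (Psi Phi : 'M[R]_(p, q)) (A : 'M[R]_p) :
  nonneg_mx Psi -> le_mx Psi Phi -> nonneg_mx A -> denK Phi \in unitmx ->
  (lam^-1 + mu^-1) *: invmx (denK Phi) = lam^-1 *: 1%:M + mu^-1 *: A ->
  denK Psi \in unitmx /\ nonneg_mx (invmx (denK Psi)).
Proof.
move=> Psi_ge0 PsiPhi A_ge0 Phi_unit invE; set w := invmx (denK Phi) *m '1_p.
have K_metzler := metzler_mxZ mu_inv_ge0 (Kmx_metzler Psi_ge0).
have w_gt0 i : 0 < w i 0.
  have := congr1 (fun M => (M *m '1_p) i 0) invE.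
  rewrite /= -scalemxAl mulmxDl -!scalemxAl mul1mx [in RHS]mxE [_ i 0]mxE -/w => lmw.
  rewrite -(pmulr_rgt0 _ lm_gt0) lmw; apply: ltr_wpDr; last by rewrite !mxE mulr1.
  exact: nonneg_mxZ mu_inv_ge0 (nonneg_mxM A_ge0 (nonneg_const_mx ler01)) i 0.
have w_ge0 : nonneg_mx w by move=> i j; rewrite (ord1 j) ltW.
have Zw_gt0 i : 0 < ((1%:M - mu^-1 *: Kmx Psi) *m w) i 0.
  have -> : denK Psi = denK Phi + mu^-1 *: ((Phi - Psi) *m c).
    by rewrite mulmxBl /Kmx !scalerDr scalerN !opprD !addrA subrK.
  rewrite mulmxDl mulmxA mulmxV // mul1mx mxE; apply: ltr_wpDr; last by rewrite mxE.
  apply: nonneg_mxM w_ge0 i 0; apply: nonneg_mxZ mu_inv_ge0 _.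
  exact: nonneg_mxM (proj1 (le_mx_subP _ _) PsiPhi) Tmp_nonneg.
split; first exact: mmatrix_unit K_metzler w_gt0 Zw_gt0.
exact: mmatrix_inv_nonneg K_metzler w_gt0 Zw_gt0.
Qed.

Definition Rmx (X : 'M[R]_(p, q)) : 'M[R]_p := invmx (denK X) *m numK X.

Lemma Rmx_nonneg X : nonneg_mx X -> nonneg_mx (invmx (denK X)) -> nonneg_mx (Rmx X).
Proof.
move=> X_ge0 inv_ge0; apply: nonneg_mxM inv_ge0 _.
exact: numK_nonneg.
Qed.

Lemma Rmx_block_eqs X : psi_eq T X -> denK X \in unitmx ->
  Rmx X = Rmx X *m X *m H + E /\ X = Rmx X *m X *m F + G.
Proof.
move=> X_eq X_unit; have [EH GF] := riccati_EGHF X_eq.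
split; apply/esym; rewrite addrC /Rmx.
  by have := congr1 (mulmx (invmx (denK X))) EH; rewrite mulmxDr mulKmx // !mulmxA.
by have := congr1 (mulmx (invmx (denK X))) GF; rewrite mulmxDr !mulKmx // !mulmxA.
Qed.

Lemma qbd_step_Rmx X : psi_eq T X -> denK X \in unitmx ->
  qbd_step (block_mx (Rmx X) (Rmx X *m X) 0 0) = block_mx (Rmx X) (Rmx X *m X) 0 0.
Proof.
move=> X_eq X_unit; have [RE XE] := Rmx_block_eqs X_eq X_unit.
by rewrite qbd_step_block -RE -mulmxA -mulmxDr -XE.
Qed.

Lemma mmatrix_Tmm_Psi_nonneg (Psi : 'M[R]_(p, q)) (Y : 'cV[R]_q) :
  nonneg_mx Psi -> le_mx (Psi *m '1_q) '1_p ->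
  nonneg_mx ((1%:M - lam^-1 *: (d + c *m Psi)) *m Y) -> nonneg_mx Y.
Proof.
move=> Psi_ge0 Psi1; apply: (mmatrix_nonneg (w := '1_q)).
- apply: metzler_mxZ (ltW lam_inv_gt0) _.
  exact: metzler_mxD Tmm_metzler (nonneg_metzler (nonneg_mxM Tmp_nonneg Psi_ge0)).
- by move=> i; rewrite mxE.
have -> : (1%:M - lam^-1 *: (d + c *m Psi)) *m '1_q
    = '1_q + lam^-1 *: (c *m ('1_p - Psi *m '1_q)).
  rewrite mulmxBl mul1mx -scalemxAl mulmxDl Tmm_mul1 -mulmxA mulmxBr scalerBr scalerDr.
  by rewrite scalerN opprD opprK addrA.
move=> i; rewrite mxE [_ i 0]mxE; apply: ltr_wpDr; last exact: ltr01.
apply: nonneg_mxZ (ltW lam_inv_gt0) _ i 0; apply: nonneg_mxM Tmp_nonneg _.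
exact/le_mx_subP.
Qed.

(* [E y = 0] because [(1 - K/mu) E = (1 + K/lam)(1 - Psi H)]; then the third block
   of [cayley_den *m EGHF = cayley_num] forces [H y = 0] through [mmatrix_Tmm_Psi_nonneg]. *)
Lemma PsiH_subinvariant_eq0 (Psi : 'M[R]_(p, q)) (y : 'cV[R]_p) :
  nonneg_mx Psi -> psi_eq T Psi -> le_mx (Psi *m '1_q) '1_p ->
  denK Psi \in unitmx -> nonneg_mx (invmx (denK Psi)) ->
  nonneg_mx y -> le_mx y (Psi *m H *m y) -> y = 0.
Proof.
move=> Psi_ge0 Psi_eq Psi1 Z_unit Z_inv y_ge0 y_sub.
have W_ge0 := numK_nonneg Psi_ge0.
have y_sub' := proj1 (le_mx_subP _ _) y_sub.
have Ey0 : E *m y = 0.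
  have [EH _] := riccati_EGHF Psi_eq.
  have ZE : denK Psi *m E = numK Psi *m (1%:M - Psi *m H).
    by rewrite mulmxBr mulmx1 mulmxA -{1}EH addrK.
  apply: nonneg_mx_anti (nonneg_mxM E_nonneg y_ge0) _.
  have -> : - (E *m y) = invmx (denK Psi) *m (numK Psi *m (Psi *m H *m y - y)).
    have -> : Psi *m H *m y - y = - ((1%:M - Psi *m H) *m y).
      by rewrite mulmxBl mul1mx opprB.
    by rewrite !mulmxN -[E](mulKmx Z_unit) ZE !mulmxA.
  exact: nonneg_mxM Z_inv (nonneg_mxM W_ge0 y_sub').
have Hy : (1%:M - lam^-1 *: (d + c *m Psi)) *m (H *m y)
    = lam^-1 *: (c *m (y - Psi *m (H *m y))).
  have := cayley_den_EGHF; rewrite EGHF_block mulmx_block => /eq_block_mx [_ _ eH _].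
  move: (congr1 (mulmx^~ y) eH); rewrite /= mulmxDl -!mulmxA Ey0 mulmx0 add0r.
  rewrite mulmxBl mul1mx -!scalemxAl => Hy_eq.
  rewrite mulmxBl mul1mx -scalemxAl mulmxDl scalerDr opprD addrA Hy_eq.
  by rewrite mulmxBr scalerBr !mulmxA.
have Hy0 : H *m y = 0.
  apply: nonneg_mx_anti (nonneg_mxM H_nonneg y_ge0) _.
  apply: (mmatrix_Tmm_Psi_nonneg Psi_ge0 Psi1); rewrite mulmxN Hy -scalerN -mulmxN opprB.
  apply: nonneg_mxZ (ltW lam_inv_gt0) _; apply: nonneg_mxM Tmp_nonneg _.
  by rewrite mulmxA.
have y_le0 : le_mx y 0 by move: y_sub; rewrite -mulmxA Hy0 mulmx0.
by apply: nonneg_mx_anti y_ge0 _ => i j; have := y_le0 i j; rewrite !mxE oppr_ge0.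
Qed.

Lemma unitmx_1B_PsiH (Psi : 'M[R]_(p, q)) : min_nonneg_sol (psi_eq T) Psi ->
  denK Psi \in unitmx -> nonneg_mx (invmx (denK Psi)) -> (1%:M - Psi *m H) \in unitmx.
Proof.
move=> Psi_min Z_unit Z_inv; have [Psi_ge0 Psi_eq _] := Psi_min.
apply: unitmx_1B_nonneg (nonneg_mxM Psi_ge0 H_nonneg) _ => y.
exact: PsiH_subinvariant_eq0 Psi_ge0 Psi_eq (psi_mul1_le1 Psi_min) Z_unit Z_inv.
Qed.

Lemma E_invmx_1B_PsiH X : psi_eq T X -> denK X \in unitmx -> (1%:M - X *m H) \in unitmx ->
  E *m invmx (1%:M - X *m H) = Rmx X.
Proof.
move=> X_eq Z_unit XH_unit; have [RE _] := Rmx_block_eqs X_eq Z_unit.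
have -> : E = Rmx X *m (1%:M - X *m H).
  by rewrite mulmxBr mulmx1 mulmxA {1}RE addrAC subrr add0r.
exact: mulmxK.
Qed.

Lemma Rmx_of_inv (X : 'M[R]_(p, q)) (A : 'M[R]_p) : denK X \in unitmx ->
  (lam^-1 + mu^-1) *: invmx (denK X) = lam^-1 *: 1%:M + mu^-1 *: A -> A = Rmx X.
Proof.
move=> Z_unit invE; rewrite /Rmx; set Y := invmx (denK X) in invE *.
have YK : mu^-1 *: (Y *m Kmx X) = Y - 1%:M.
  have := mulVmx Z_unit; rewrite -/Y mulmxBr mulmx1 -scalemxAr => <-.
  by rewrite opprB addrC subrK.
apply: (scalerI (invr_neq0 (lt0r_neq0 mu_gt0))).
have -> : mu^-1 *: A = (lam^-1 + mu^-1) *: Y - lam^-1 *: 1%:M.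
  by rewrite invE [lam^-1 *: _ + _]addrC addrK.
rewrite mulmxDr mulmx1 -scalemxAr scalerDr scalerA mulrC -scalerA YK.
by rewrite scalerDl scalerBr [lam^-1 *: _ + _]addrC addrA.
Qed.

Lemma qbd_min_sol_Rmx (Psi : 'M[R]_(p, q)) (RD : 'M[R]_(p + q)) :
  min_nonneg_sol (psi_eq T) Psi -> min_nonneg_sol (RD_eq T lam mu) RD ->
  [/\ denK Psi \in unitmx, nonneg_mx (invmx (denK Psi))
    & RD = block_mx (Rmx Psi) (Rmx Psi *m Psi) 0 0].
Proof.
move=> [Psi_ge0 Psi_eq Psi_le] RD_min; have [RD_ge0 _ RD_le] := RD_min.
have [RDE AE BE] := qbd_min_sol_block RD_min.
set A := ulsubmx RD in RDE AE BE *; set B := ursubmx RD in RDE AE BE *.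
pose Phi := B *m F + G; have BE' : B = A *m Phi by rewrite {1}BE mulmxDr mulmxA.
have AE' : A = A *m Phi *m H + E by rewrite -BE'.
have PhiE : Phi = A *m Phi *m F + G by rewrite -BE'.
have [Phi_eq Phi_unit Phi_inv] := qbd_riccati AE' PhiE.
have Phi_ge0 : nonneg_mx Phi.
  exact: nonneg_mxD (nonneg_mxM (nonneg_ursubmx RD_ge0) F_nonneg) G_nonneg.
have PsiPhi := Psi_le Phi Phi_ge0 Phi_eq.
have [Z_unit Z_inv] := denK_mmatrix Psi_ge0 PsiPhi (nonneg_ulsubmx RD_ge0) Phi_unit Phi_inv.
have R_ge0 := Rmx_nonneg Psi_ge0 Z_inv.
have RD_le_R : le_mx RD (block_mx (Rmx Psi) (Rmx Psi *m Psi) 0 0).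
  apply: RD_le; last exact: qbd_step_Rmx.
  by apply: nonneg_block_mx => //; [exact: nonneg_mxM | exact: nonneg_mx0..].
have B_le : le_mx B (Rmx Psi *m Psi).
  by move=> i j; have := RD_le_R (lshift q i) (rshift p j); rewrite {1}RDE !block_mxEur.
have PhiPsi : Phi = Psi.
  apply: le_mx_anti PsiPhi; rewrite [X in le_mx _ X](proj2 (Rmx_block_eqs Psi_eq Z_unit)).
  exact: le_mxD (le_mxMr B_le F_nonneg) (fun i j => lexx _).
rewrite PhiPsi in Phi_inv; have AR := Rmx_of_inv Z_unit Phi_inv.
by split=> //; rewrite RDE BE' PhiPsi AR.
Qed.

End FluidQueue.

Theorem theorem7 (R : realType) (p q : nat) (T : 'M[R]_(p + q)) (lam mu : R)
    (Psi : 'M[R]_(p, q)) (RD : 'M[R]_(p + q)) :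
  (0 < p)%N -> (0 < q)%N ->
  generator T ->
  0 < lam -> 0 < mu ->
  (forall i, `|T i i| <= lam) -> (forall i, `|T i i| <= mu) ->
  min_nonneg_sol (psi_eq T) Psi ->
  min_nonneg_sol (RD_eq T lam mu) RD ->
  let K := Tpp T + Psi *m Tmp T in
  let R1 := Emx T lam mu *m invmx (1%:M - Psi *m Hmx T lam mu) in
  [/\ (1%:M - Psi *m Hmx T lam mu) \in unitmx,
      (1%:M - mu^-1 *: K) \in unitmx,
      R1 = invmx (1%:M - mu^-1 *: K) *m (1%:M + lam^-1 *: K)
    & RD = block_mx R1 (R1 *m Psi) 0 0].
Proof.
move=> _ _ T_gen lam_gt0 mu_gt0 T_lam T_mu Psi_min RD_min K R1.
have [Z_unit Z_inv RDE] := qbd_min_sol_Rmx T_gen lam_gt0 mu_gt0 T_lam T_mu Psi_min RD_min.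
have PsiH_unit := unitmx_1B_PsiH T_gen lam_gt0 mu_gt0 T_lam T_mu Psi_min Z_unit Z_inv.
have [_ Psi_eq _] := Psi_min.
have R1E : R1 = Rmx T lam mu Psi := E_invmx_1B_PsiH T_gen lam_gt0 mu_gt0 Psi_eq Z_unit PsiH_unit.
by split=> //; rewrite R1E.
Qed.
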